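(* Let $q\ge2$, $b\ge2$, $t\ge1$ and $n\ge(t+1)b-1$. Let $\boldsymbol{x}=0^b\circ\boldsymbol{X}^1_{n-b,q,b}$ and $\boldsymbol{y}=0^{b-1}1\circ\boldsymbol{X}^1_{n-b,q,b}$ (so $\boldsymbol{x}=\boldsymbol{X}^0_{n,q,b}$ and $\boldsymbol{y}$ differs from $\boldsymbol{x}$ only in its $b$-th entry). Then \[ |\mathcal{D}_{t,b}(\boldsymbol{x})\cap\mathcal{D}_{t,b}(\boldsymbol{y})|=D_{q,b}(n,t)-D_{q,b}(n-b,t)+D_{q,b}(n-(q+1)b,t-q). \] In particular, $N^-_{q,b}(n,t)\ge D_{q,b}(n,t)-D_{q,b}(n-b,t)+D_{q,b}(n-(q+1)b,t-q)$.
   Context: $\Sigma_q=\{0,\ldots,q-1\}$; $\alpha^k$ denotes $k$ copies of $\alpha$, $\circ$ is concatenation. A $b$-burst-deletion at position $i\in[1,n-b+1]$ transforms $x_1\cdots x_n$ into $x_1\cdots x_{i-1}x_{i+b}\cdots x_n$. For $n\ge tb+1$, $t\ge0$, $\mathcal{D}_{t,b}(\boldsymbol{x})$ is the set of all length-$(n-tb)$ sequences obtainable from $\boldsymbol{x}$ by $t$ successive $b$-burst-deletions. The $b$-cyclic sequence $\boldsymbol{X}^{\sigma}_{m,q,b}=X_1\cdots X_m$ has $X_i\equiv\sigma+\lfloor (i-1)/b\rfloor\pmod q$. For $m\ge bs+1$, $s\ge0$: $D_{q,b}(m,s)=\max\{|\mathcal{D}_{s,b}(\boldsymbol{z})|:\boldsymbol{z}\in\Sigma_q^m\}$;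 conventions $D_{q,b}(m,s)=1$ if $m=bs\ge0$, $D_{q,b}(m,s)=0$ if $m<bs$ or $s<0$. $N^-_{q,b}(n,t)=\max\{|\mathcal{D}_{t,b}(\boldsymbol{u})\cap\mathcal{D}_{t,b}(\boldsymbol{v})|:\boldsymbol{u}\ne\boldsymbol{v}\in\Sigma_q^n\}$. *)

(* Sequences over Sigma_q are represented as seq nat
   (entries < q); the maxima range over tuples of 'I_q. *)
From mathcomp Require Import all_boot all_order all_algebra.
Set Implicit Arguments. Unset Strict Implicit. Unset Printing Implicit Defensive.
Import Order.TTheory GRing.Theory Num.Theory.

Definition bdel (b i : nat) (x : seq nat) : seq nat := take i x ++ drop (i + b) x.

Fixpoint Dset (b t : nat) (x : seq nat) : seq (seq nat) :=
  match t with
  | 0 => [:: x]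
  | t'.+1 =>
      if b <= size x then
        undup (flatten [seq Dset b t' (bdel b i x) | i <- iota 0 (size x - b).+1])
      else [::]
  end.

(* b-cyclic sequence X^sigma_{m,q,b}: X_i = sigma + floor((i-1)/b) mod q,
   i = 1..m (here 0-indexed). *)
Definition cycseq (sigma m q b : nat) : seq nat :=
  mkseq (fun i => (sigma + i %/ b) %% q) m.

(* D_{q,b}(m,s), with the paper's conventions for m <= b s or s < 0. *)
Definition Dmax (q b : nat) (m s : int) : nat :=
  if (s < 0)%R then 0
  else if (m < (b%:Z * s))%R then 0
  else if m == (b%:Z * s)%R then 1
  else \max_(z : (absz m).-tuple 'I_q) size (Dset b (absz s) (map val z)).

Definition Dint (b t : nat) (u v : seq nat) : nat :=
  size [seq w <- Dset b t u | w \in Dset b t v].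

Definition Nminus (q b n t : nat) : nat :=
  \max_(u : n.-tuple 'I_q) \max_(v : n.-tuple 'I_q | u != v)
     Dint b t (map val u) (map val v).

From mathcomp Require Import all_boot all_order all_algebra zify.
Import Order.TTheory GRing.Theory Num.Theory.

Set Implicit Arguments. Unset Strict Implicit. Unset Printing Implicit Defensive.

(* A sequence of D_{t,b}(w) that starts with a letter a comes from deleting t bursts
   none of which covers the position of that a, so a is one of the "heads"
   w_1, w_{b+1}, ..., w_{tb+1}; if w_{kb+1} is its first occurrence, these sequences are
   exactly a followed by D_{t-k,b}(w_{kb+2} ... w_n).  Counting by first letter gives
   |D_{t,b}(w)| <= sum_{k < min(q, t+1)} D_{q,b}(n - kb - 1, t - k), since the indices
   of first occurrences are distinct and the summands decrease in k; equality holds for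
   b-cyclic sequences, whose heads are pairwise distinct, so D_{q,b}(n, t) is attained by
   X^0_{n,q,b}.

   Write x_r = 0^r X and y_r = 0^{r-1} 1 X with X = X^1_{n-b,q,b}, so that x = x_b and
   y = y_b.  For r >= 2 the pair x_r, y_r has the cyclic heads 0, 1, 2, ...; splitting
   the intersection by first letter, every branch but the first compares two equal
   suffixes, and the first one is the intersection for (x_{r-1}, y_{r-1}).  For r = 1,
   the branch of the letter 0 in y_1 = 1 X starts only at k = q and contributes
   D(n - (q+1)b, t - q); the branch of the letter 1 is contained in D_{t,b}(X).
   Telescoping from r = b down to r = 1 gives the identity. *)

Lemma size_by_head (T : eqType) (L : seq (seq T)) (S : seq T) (F : T -> seq (seq T)) :
  uniq L -> [::] \notin L -> uniq S -> {in S, forall a, uniq (F a)} ->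
  (forall a y, (a :: y \in L) = (a \in S) && (y \in F a)) ->
  size L = \sum_(a <- S) size (F a).
Proof.
move=> uL nL uS uF memL.
have uLS : uniq [seq a :: y | a <- S, y <- F a].
  by apply: allpairs_uniq_dep => // -[a y] [a' y'] _ _ /= [-> ->].
have eLS : L =i [seq a :: y | a <- S, y <- F a].
  case=> [|a y]; first by rewrite (negbTE nL); symmetry; apply/allpairsPdep => -[? [? []]].
  rewrite memL; apply/andP/allpairsPdep => [[ha hy] | [a' [y' [ha hy [-> ->]]]]] //.
  by exists a, y.
by rewrite (perm_size (uniq_perm uL uLS eLS)) size_allpairs_dep sumnE big_map.
Qed.

Lemma size_filter_mem_sub (T : eqType) (s1 s2 : seq T) :
  uniq s1 -> uniq s2 -> {subset s2 <= s1} -> size [seq x <- s1 | x \in s2] = size s2.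
Proof.
move=> u1 u2 s21; apply/perm_size/uniq_perm; rewrite ?filter_uniq // => x.
by rewrite mem_filter andb_idr //; exact: s21.
Qed.

Lemma sum_uniq_le_prefix (h : nat -> nat) n (K : seq nat) :
  (forall k, k.+1 < n -> h k.+1 <= h k) -> uniq K -> all (gtn n) K ->
  \sum_(k <- K) h k <= \sum_(0 <= k < size K) h k.
Proof.
move=> h_step; have h_mono i j : i <= j < n -> h j <= h i.
  move=> /andP[hij hj]; apply: (@homo_leq_in nat (gtn n) h (fun x y => y <= x)) => //.
  - by move=> y x z hyx hzy; exact: leq_trans hzy hyx.
  - by move=> x y _ hy k /andP[_ hky]; apply: ltn_trans hy.
  - by move=> k _; exact: h_step.
  - exact: leq_ltn_trans hj.
elim: n h_step h_mono K => [|n IH] h_step h_mono K uK aK.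
  by case: K aK uK => // k K /andP[].
have hK : size K <= n.+1.
  rewrite -(size_iota 0 n.+1); apply: uniq_leq_size => // x hx.
  by rewrite mem_iota; move/allP: aK => /(_ x hx).
have IH' K' : uniq K' -> all (gtn n) K' ->
    \sum_(k <- K') h k <= \sum_(0 <= k < size K') h k.
  apply: IH => [k hk | i j /andP[hij hj]]; first by apply: h_step; lia.
  by apply: h_mono; rewrite hij; lia.
case hn: (n \in K); last first.
  apply: IH' => //; apply/allP => x hx; move/allP: aK => /(_ x hx) /=.
  by rewrite ltnS leq_eqVlt => /orP[/eqP hxn | //]; move: hn; rewrite -hxn hx.
have hsz : size K = (size (rem n K)).+1 by rewrite size_rem // prednK //; case: (K) hn.
rewrite (perm_big _ (perm_to_rem hn)) big_cons hsz big_nat_recr //= addnC leq_add //.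
  apply: IH'; first exact: rem_uniq.
  apply/allP => x; rewrite mem_rem_uniq // inE => /andP[hxn hxK].
  by move/allP: aK => /(_ x hxK) /=; rewrite ltnS leq_eqVlt (negbTE hxn).
by apply: h_mono; rewrite ltnSn andbT -ltnS -hsz.
Qed.

Section BurstDeletions.
Variable b : nat.
Implicit Types (t s j k a : nat) (w y z p : seq nat).

Lemma size_bdel i w : i + b <= size w -> size (bdel b i w) = size w - b.
Proof. by move=> h; rewrite /bdel size_cat size_takel ?size_drop; lia. Qed.

Lemma drop_bdel_ge n i w : i <= n -> i <= size w -> drop n (bdel b i w) = drop (n + b) w.
Proof.
move=> hn hi; rewrite /bdel drop_cat size_takel // ltnNge hn /=.
by rewrite drop_drop; congr drop; lia.
Qed.

Lemma nth_bdel_ge n i w : i <= n -> i <= size w -> nth 0 (bdel b i w) n = nth 0 w (n + b).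
Proof.
move=> hn hi; have := congr1 (nth 0 ^~ 0) (drop_bdel_ge hn hi).
by rewrite /= !nth_drop !addn0.
Qed.

Lemma drop_bdel_le j i w : j <= i -> drop j (bdel b i w) = bdel b (i - j) (drop j w).
Proof.
elim: j i w => [|j IH] [|i] [|a w] //= hj; rewrite ?subn0 ?drop0 //.
by rewrite subSS -IH.
Qed.

Lemma Dset_uniq t w : uniq (Dset b t w).
Proof. by case: t => [|t] //=; case: ifP => // _; exact: undup_uniq. Qed.

Lemma mem_DsetSP t w y :
  reflect (exists2 i, i + b <= size w & y \in Dset b t (bdel b i w))
          (y \in Dset b t.+1 w).
Proof.
have -> : Dset b t.+1 w = if b <= size w then
    undup (flatten [seq Dset b t (bdel b i w) | i <- iota 0 (size w - b).+1])
  else [::] by [].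
case: ifP => hb; last by apply: (iffP idP) => // -[i hi _]; lia.
rewrite mem_undup; apply: (iffP flatten_mapP) => -[i].
  by rewrite mem_iota => hi hy; exists i => //; lia.
by move=> hi hy; exists i => //; rewrite mem_iota; lia.
Qed.

Lemma mem_Dset_size t w y : y \in Dset b t w -> t * b <= size w /\ size y = size w - t * b.
Proof.
elim: t w y => [|t IH] w y; first by rewrite inE => /eqP ->; rewrite subn0.
by case/mem_DsetSP => i hi /IH; rewrite size_bdel // mulSn; lia.
Qed.

Lemma Dset_short t w : size w < t * b -> Dset b t w = [::].
Proof.
move=> h; case E: (Dset b t w) => [|y s] //.
have /mem_Dset_size[] : y \in Dset b t w by rewrite E mem_head.
lia.
Qed.

Lemma Dset_trans j s w z y : z \in Dset b j w -> y \in Dset b s z -> y \in Dset b (j + s) w.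
Proof.
elim: j w => [|j IH] w; first by rewrite inE => /eqP ->.
by case/mem_DsetSP => i hi /IH hz /hz hy; apply/mem_DsetSP; exists i.
Qed.

Lemma Dset_prefix j p z : size p = j * b -> z \in Dset b j (p ++ z).
Proof.
elim: j p => [|j IH] p hp; first by move/size0nil: hp => ->; rewrite inE.
rewrite mulSn in hp; apply/mem_DsetSP; exists 0; first by rewrite size_cat; lia.
rewrite /bdel take0 drop_cat; case: ifP => h; first by apply: IH; rewrite size_drop; lia.
by rewrite (_ : b - size p = 0) ?drop0; [apply: (IH [::]) => /= | ]; lia.
Qed.

Lemma Dset_drop j s w y : j * b <= size w ->
  y \in Dset b s (drop (j * b) w) -> y \in Dset b (j + s) w.
Proof.
move=> hj; apply: Dset_trans.
by rewrite -{2}(cat_take_drop (j * b) w); apply: Dset_prefix; rewrite size_takel.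
Qed.

Lemma Dset_cons s a z y : y \in Dset b s z -> a :: y \in Dset b s (a :: z).
Proof.
elim: s z y => [|s IH] z y; first by rewrite !inE => /eqP ->.
by case/mem_DsetSP => i hi /IH hy; apply/mem_DsetSP; exists i.+1.
Qed.

Lemma mem_Dset_nil t w : ([::] \in Dset b t w) = (size w == t * b).
Proof.
apply/idP/eqP => [/mem_Dset_size[] /= | h]; first lia.
by have := @Dset_prefix t w [::] h; rewrite cats0.
Qed.

Lemma size_Dset_exact t w : size w = t * b -> size (Dset b t w) = 1.
Proof.
move=> h; apply: (@perm_size _ _ [:: [::]]); apply: uniq_perm; rewrite ?Dset_uniq //.
move=> y; rewrite inE; apply/idP/eqP => [/mem_Dset_size[_] | ->].
  by rewrite h subnn => /size0nil.
by rewrite mem_Dset_nil h.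
Qed.

Lemma Dint_refl t w : Dint b t w w = size (Dset b t w).
Proof. by rewrite /Dint (all_filterP _) //; apply/allP. Qed.

Lemma mem_Dset_consP t w a y :
  (a :: y \in Dset b t w) <-> exists k, [/\ k <= t, k * b < size w,
    nth 0 w (k * b) = a & y \in Dset b (t - k) (drop (k * b).+1 w)].
Proof.
split.
  elim: t w y => [|t IH] w y.
    by rewrite inE => /eqP <-; exists 0; rewrite mul0n /= drop0 inE.
  case/mem_DsetSP => i hi /IH [k [hk]]; rewrite size_bdel // => hkw hwk hy.
  have [hik | hki] := leqP i (k * b).
    exists k.+1; rewrite mulSn; split; [lia | lia | | ].
      by rewrite -hwk nth_bdel_ge 1?(addnC (k * b)) //; lia.
    move: hy; rewrite drop_bdel_ge; [|lia|lia].
    by rewrite subSS (_ : (k * b).+1 + b = (b + k * b).+1) //; lia.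
  exists k; split; [lia | lia | | ].
    by rewrite -hwk /bdel nth_cat size_takel ?hki ?nth_take //; lia.
  move: hy; rewrite drop_bdel_le // => hy.
  rewrite (_ : t.+1 - k = (t - k).+1); last lia.
  by apply/mem_DsetSP; exists (i - (k * b).+1); rewrite ?size_drop; [lia|].
case=> k [hk hkw hwk hy].
have -> : w = take (k * b) w ++ a :: drop (k * b).+1 w.
  by rewrite -hwk -drop_nth // cat_take_drop.
rewrite -(subnKC hk); apply: (Dset_trans (z := a :: drop (k * b).+1 w)).
  by apply: Dset_prefix; rewrite size_takel //; lia.
exact: Dset_cons.
Qed.

Definition heads t w := [seq nth 0 w (k * b) | k <- iota 0 t.+1].

(* Only the first head equal to [a] matters: later occurrences give subsets
   (see mem_Dset_cons_tail). *)
Definition Dtail t w a :=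
  let k := index a (heads t w) in
  if a \in heads t w then Dset b (t - k) (drop (k * b).+1 w) else [::].

Lemma mem_heads t w k : k <= t -> nth 0 w (k * b) \in heads t w.
Proof. by move=> hk; apply/mapP; exists k; rewrite // mem_iota; lia. Qed.

Lemma index_heads t w a : a \in heads t w ->
  index a (heads t w) <= t /\ nth 0 w (index a (heads t w) * b) = a.
Proof.
move=> ha; have hi : index a (heads t w) <= t.
  by rewrite -ltnS -(size_iota 0 t.+1) -(size_map (fun k => nth 0 w (k * b))) index_mem.
by split=> //; rewrite -[in RHS](nth_index 0 ha) (nth_map 0) ?size_iota ?nth_iota.
Qed.

Lemma index_heads_le t w k : k <= t -> index (nth 0 w (k * b)) (heads t w) <= k.
Proof.
move=> hk; rewrite -ltnS index_ltn // (take_nth 0) ?size_map ?size_iota //.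
by rewrite mem_rcons (nth_map 0) ?size_iota ?nth_iota // mem_head.
Qed.

Lemma Dtail_uniq t w a : uniq (Dtail t w a).
Proof. by rewrite /Dtail; case: ifP => // _; exact: Dset_uniq. Qed.

Lemma mem_Dset_cons_tail t w a y : t * b < size w ->
  (a :: y \in Dset b t w) = (y \in Dtail t w a).
Proof.
move=> htw; rewrite /Dtail; set i := index a (heads t w).
have le_mul k : k <= t -> k * b <= t * b by move=> hk; rewrite leq_mul2r hk orbT.
apply/idP/idP.
  case/mem_Dset_consP => k [hk hkw hwk hy].
  have ha : a \in heads t w by rewrite -hwk mem_heads.
  have hik : i <= k by rewrite /i -hwk index_heads_le.
  have hkib : (k - i) * b + (i * b).+1 = (k * b).+1.
    by rewrite mulnBl addnS subnK // leq_mul2r hik orbT.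
  rewrite ha (_ : t - i = (k - i) + (t - k)); last lia.
  by apply: Dset_drop; rewrite ?drop_drop ?hkib // size_drop; have := le_mul _ hk; lia.
case: ifP => // ha hy; have [hit hwi] := index_heads ha.
by apply/mem_Dset_consP; exists i; split=> //; have := le_mul _ hit; lia.
Qed.

Lemma Dtail_first t w k : k <= t ->
  (forall j, j < k -> nth 0 w (j * b) != nth 0 w (k * b)) ->
  Dtail t w (nth 0 w (k * b)) = Dset b (t - k) (drop (k * b).+1 w).
Proof.
move=> hk hfirst; rewrite /Dtail mem_heads //.
have [_ hwi] := index_heads (mem_heads w hk).
have := index_heads_le w hk; rewrite leq_eqVlt => /orP[/eqP -> // | hlt].
by have := hfirst _ hlt; rewrite hwi eqxx.
Qed.

Lemma Dtail_head t w : Dtail t w (nth 0 w 0) = Dset b t (drop 1 w).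
Proof. by have := @Dtail_first t w 0 (leq0n t); rewrite mul0n subn0; apply. Qed.

Lemma Dtail_notin t w a :
  (forall k, k <= t -> nth 0 w (k * b) != a) -> Dtail t w a = [::].
Proof.
move=> hna; rewrite /Dtail; case: ifP => // /index_heads [hi hwi].
by have := hna _ hi; rewrite hwi eqxx.
Qed.

Lemma size_Dset_tails t w : t * b < size w ->
  size (Dset b t w) = \sum_(a <- undup (heads t w)) size (Dtail t w a).
Proof.
move=> htw; apply: size_by_head; rewrite ?Dset_uniq ?undup_uniq ?mem_Dset_nil //.
- by apply/eqP; lia.
- by move=> a _; exact: Dtail_uniq.
move=> a y; rewrite mem_Dset_cons_tail // mem_undup /Dtail.
by case: (a \in heads t w).
Qed.

Lemma Dint_tails t u v : t * b < size u -> t * b < size v ->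
  Dint b t u v =
  \sum_(a <- undup (heads t u)) size [seq y <- Dtail t u a | y \in Dtail t v a].
Proof.
move=> htu htv; apply: size_by_head; rewrite ?filter_uniq ?Dset_uniq ?undup_uniq //.
- by rewrite mem_filter mem_Dset_nil; apply/nandP; left; apply/eqP; lia.
- by move=> a _; rewrite filter_uniq ?Dtail_uniq.
move=> a y; rewrite !mem_filter !mem_Dset_cons_tail // mem_undup andbC /Dtail.
by case: (a \in heads t u).
Qed.

End BurstDeletions.

Lemma size_undup_heads q b t w : 0 < q -> all (gtn q) w ->
  size (undup (heads b t w)) <= minn q t.+1.
Proof.
move=> q_gt0 wq; rewrite leq_min; apply/andP; split; last first.
  by rewrite (leq_trans (size_undup _)) // size_map size_iota.
rewrite -(size_iota 0 q) uniq_leq_size ?undup_uniq // => a; rewrite mem_undup mem_iota.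
case/mapP=> k _ ->; have [hk | hk] := ltnP (k * b) (size w).
  exact: (allP wq) _ (mem_nth 0 hk).
by rewrite nth_default // add0n q_gt0.
Qed.

Section CyclicHeads.
Variables q b : nat.
Hypothesis q_gt0 : 0 < q.
Variables (c t : nat).
Let m := minn q t.+1.
Implicit Types (u v w : seq nat).

Definition cyc_heads w := forall k, k <= t -> nth 0 w (k * b) = (c + k) %% q.

Lemma eq_cyc_mod j k : j < q -> k < q -> ((c + j) %% q == (c + k) %% q) = (j == k).
Proof. by move=> hj hk; rewrite eqn_modDl !modn_small. Qed.

Lemma perm_undup_heads_cyc w : cyc_heads w ->
  perm_eq (undup (heads b t w)) [seq (c + k) %% q | k <- iota 0 m].
Proof.
move=> hw; apply: uniq_perm; rewrite ?undup_uniq //.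
  apply/(uniqP 0) => i j; rewrite !inE size_map size_iota => hi hj.
  rewrite !(nth_map 0) ?size_iota // !nth_iota // !add0n => /eqP.
  move: hi hj; rewrite /m !leq_min => /andP[hi _] /andP[hj _].
  by rewrite eq_cyc_mod // => /eqP.
move=> a; rewrite mem_undup; apply/mapP/mapP => -[k]; rewrite mem_iota /m => hk ->.
  have hkq : k %% q <= k := leq_mod k q.
  exists (k %% q); last by rewrite hw ?modnDmr //; lia.
  by rewrite mem_iota leq_min ltn_pmod //=; lia.
by exists k; [rewrite mem_iota | rewrite hw]; move: hk; rewrite leq_min; lia.
Qed.

Lemma Dtail_cyc w k : cyc_heads w -> k < m ->
  Dtail b t w ((c + k) %% q) = Dset b (t - k) (drop (k * b).+1 w).
Proof.
move=> hw hk; rewrite -hw; last lia.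
apply: Dtail_first => [|j hj]; first lia.
by rewrite !hw ?eq_cyc_mod ?neq_ltn ?hj //; lia.
Qed.

Lemma size_Dset_cyc w : cyc_heads w -> t * b < size w ->
  size (Dset b t w) = \sum_(0 <= k < m) size (Dset b (t - k) (drop (k * b).+1 w)).
Proof.
move=> hw htw; rewrite size_Dset_tails // (perm_big _ (perm_undup_heads_cyc hw)) big_map.
rewrite /index_iota subn0; apply: eq_big_seq => k; rewrite mem_iota => hk.
by rewrite (Dtail_cyc hw).
Qed.

Lemma Dint_cycl u v : cyc_heads u -> t * b < size u -> t * b < size v ->
  Dint b t u v = \sum_(0 <= k < m)
    size [seq y <- Dset b (t - k) (drop (k * b).+1 u) | y \in Dtail b t v ((c + k) %% q)].
Proof.
move=> hu htu htv; rewrite Dint_tails // (perm_big _ (perm_undup_heads_cyc hu)) big_map.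
rewrite /index_iota subn0; apply: eq_big_seq => k; rewrite mem_iota => hk.
by rewrite (Dtail_cyc hu).
Qed.

Lemma Dint_cyc u v : cyc_heads u -> cyc_heads v -> t * b < size u -> t * b < size v ->
  Dint b t u v = \sum_(0 <= k < m) Dint b (t - k) (drop (k * b).+1 u) (drop (k * b).+1 v).
Proof.
move=> hu hv htu htv; rewrite Dint_cycl //.
by apply: eq_big_nat => k /andP[_ hk]; rewrite (Dtail_cyc hv).
Qed.

End CyclicHeads.

Section CyclicSequences.
Variables q b : nat.
Implicit Types (c d n t s : nat).

(* [shcycseq c d n] is [cycseq c (d + n) q b] with its first [d] entries dropped. *)
Definition shcycseq c d n := mkseq (fun i => (c + (d + i) %/ b) %% q) n.

Lemma size_shcycseq c d n : size (shcycseq c d n) = n.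
Proof. exact: size_mkseq. Qed.

Lemma nth_shcycseq c d n i : i < n -> nth 0 (shcycseq c d n) i = (c + (d + i) %/ b) %% q.
Proof. exact: nth_mkseq. Qed.

Lemma drop_shcycseq c d n e : drop e (shcycseq c d n) = shcycseq c (d + e) (n - e).
Proof.
apply: (@eq_from_nth _ 0) => [|i]; rewrite size_drop !size_shcycseq // => hi.
by rewrite nth_drop !nth_shcycseq ?addnA //; lia.
Qed.

Hypotheses (q_gt0 : 0 < q) (b_gt0 : 0 < b).

Lemma shcycseq_mod c d n : shcycseq c d n = shcycseq (c + d %/ b) (d %% b) n.
Proof.
apply: eq_mkseq => i; congr (_ %% q).
by rewrite {1}(divn_eq d b) -addnA divnMDl // addnA.
Qed.

Lemma cyc_heads_shcycseq c d n t : d < b -> t * b < n -> cyc_heads q b c t (shcycseq c d n).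
Proof.
move=> hd hn k hk; rewrite nth_shcycseq; last first.
  by apply: leq_ltn_trans hn; rewrite leq_mul2r hk orbT.
by rewrite (addnC d) divnMDl // divn_small // addn0.
Qed.

Lemma all_shcycseq c d n : all (gtn q) (shcycseq c d n).
Proof. by apply/allP => x /mapP [i _ ->]; exact: ltn_pmod. Qed.

Definition Dcyc n t := size (Dset b t (shcycseq 0 0 n)).

Lemma size_Dset_shcycseq c d n t : size (Dset b t (shcycseq c d n)) = Dcyc n t.
Proof.
elim/ltn_ind: n c d t => n IH c d t; rewrite /Dcyc.
have [hn | hn | hn] := ltngtP n (t * b).
- by rewrite !Dset_short // size_shcycseq.
- have hc c' d' : d' < b -> cyc_heads q b c' t (shcycseq c' d' n).
    by move=> hd'; exact: cyc_heads_shcycseq.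
  rewrite shcycseq_mod !(size_Dset_cyc q_gt0 (hc _ _ _)) ?size_shcycseq ?ltn_pmod //.
  apply: eq_big_nat => k /andP[_ hk].
  have hkb : k * b <= t * b by rewrite leq_mul2r; move: hk; rewrite leq_min ltnS; lia.
  by rewrite !drop_shcycseq shcycseq_mod [shcycseq 0 _ _]shcycseq_mod !IH //; lia.
- by rewrite !size_Dset_exact // size_shcycseq.
Qed.

Lemma Dcyc_rec n t : t * b < n ->
  Dcyc n t = \sum_(0 <= k < minn q t.+1) Dcyc (n - (k * b).+1) (t - k).
Proof.
move=> hn; rewrite [Dcyc n t]/Dcyc.
rewrite (size_Dset_cyc q_gt0 (cyc_heads_shcycseq _ b_gt0 hn)) ?size_shcycseq //.
by apply: eq_big_nat => k _; rewrite drop_shcycseq size_Dset_shcycseq.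
Qed.

Lemma Dcyc_short n t : n < t * b -> Dcyc n t = 0.
Proof. by move=> hn; rewrite /Dcyc Dset_short // size_shcycseq. Qed.

Lemma Dcyc_exact n t : n = t * b -> Dcyc n t = 1.
Proof. by move=> hn; rewrite /Dcyc size_Dset_exact // size_shcycseq. Qed.

Lemma Dcyc_mono n s : b <= n -> Dcyc (n - b) s <= Dcyc n s.+1.
Proof.
move=> hn; rewrite -(size_Dset_shcycseq 0 b) [Dcyc n _]/Dcyc.
apply: uniq_leq_size; rewrite ?Dset_uniq // => y hy.
by apply: (@Dset_drop b 1); rewrite ?drop_shcycseq ?size_shcycseq ?mul1n.
Qed.

Lemma Dcyc_tail_mono n t k : t * b < n -> k.+1 <= t ->
  Dcyc (n - (k.+1 * b).+1) (t - k.+1) <= Dcyc (n - (k * b).+1) (t - k).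
Proof.
move=> hn hk; have : k.+1 * b <= t * b by rewrite leq_mul2r hk orbT.
rewrite mulSn => hkb; rewrite (_ : t - k = (t - k.+1).+1); last lia.
rewrite (_ : n - (k * b).+1 = n - (b + k * b).+1 + b); last lia.
by rewrite -{1}(addnK b (n - _)) Dcyc_mono ?leq_addl.
Qed.

Lemma size_Dset_le_Dcyc n t w : size w = n -> all (gtn q) w -> size (Dset b t w) <= Dcyc n t.
Proof.
elim/ltn_ind: n t w => n IH t w hw wq.
have [hn | hn | hn] := ltngtP n (t * b); last by rewrite size_Dset_exact ?hw // Dcyc_exact.
  by rewrite Dset_short ?hw.
pose h k := Dcyc (n - (k * b).+1) (t - k); set hs := heads b t w.
have tails_le : size (Dset b t w) <= \sum_(a <- undup hs) h (index a hs).
  rewrite size_Dset_tails ?hw // big_seq_cond [X in _ <= X]big_seq_cond.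
  apply: leq_sum => a /andP[]; rewrite mem_undup => ha _; rewrite /Dtail ha.
  have [hi _] := index_heads ha; apply: IH; rewrite ?size_drop ?hw //.
    have : index a hs * b <= t * b by rewrite leq_mul2r hi orbT.
    lia.
  by apply/allP => x /mem_drop; apply/allP.
apply: leq_trans tails_le _; rewrite -(big_map (index^~ hs) xpredT h) Dcyc_rec //.
set K := map _ _; have sK : size K <= minn q t.+1 by rewrite size_map size_undup_heads.
apply: leq_trans (sum_uniq_le_prefix (n := t.+1) _ _ _) _.
- by move=> k hk; exact: Dcyc_tail_mono.
- rewrite map_inj_in_uniq ?undup_uniq // => a a'; rewrite !mem_undup => ha ha' e.
  by rewrite -(index_heads ha).2 -(index_heads ha').2 e.
- by apply/allP => k /mapP[a]; rewrite mem_undup => /index_heads[hi _] ->.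
by rewrite [X in _ <= X](big_cat_nat (n := size K)) ?leq_addr.
Qed.

End CyclicSequences.

Lemma ord_tuple_of_seq q n (s : seq nat) : size s = n -> all (gtn q) s ->
  exists u : n.-tuple 'I_q, map val u = s.
Proof.
elim: s n => [|x s IH] [|n] //= => [_ _ | [hn] /andP[hx hs]]; first by exists [tuple].
by have [u hu] := IH n hn hs; exists [tuple of Ordinal hx :: u]; rewrite /= hu.
Qed.

Lemma Dmax_Dcyc q b n s : 0 < q -> 0 < b -> Dmax q b n%:Z s%:Z = Dcyc q b n s.
Proof.
move=> q_gt0 b_gt0; rewrite /Dmax -PoszM ltz_nat eqz_nat /= mulnC.
case: ltngtP => hn; [exact/esym/Dcyc_short | apply/eqP | exact/esym/Dcyc_exact].
rewrite eqn_leq; apply/andP; split.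
  apply/bigmax_leqP => z _; apply: size_Dset_le_Dcyc; rewrite ?size_map ?size_tuple //.
  by apply/allP => x /mapP[i _ ->]; exact: ltn_ord.
rewrite /Dcyc.
have [u <-] := ord_tuple_of_seq (size_shcycseq q b 0 0 n) (all_shcycseq b q_gt0 0 0 n).
exact: (leq_bigmax_cond (P := xpredT)).
Qed.

Lemma Dint_le_Nminus q b n t (u v : seq nat) : size u = n -> size v = n ->
  all (gtn q) u -> all (gtn q) v -> u != v -> Dint b t u v <= Nminus q b n t.
Proof.
move=> su sv uq vq neq_uv.
have [u' hu] := ord_tuple_of_seq su uq; have [v' hv] := ord_tuple_of_seq sv vq.
apply: leq_trans (leq_bigmax u'); rewrite -hu -hv.
apply: (leq_bigmax_cond (P := fun v => u' != v)
  (F := fun v => Dint b t (map val u') (map val v))).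
by apply: contra neq_uv => /eqP eq_uv; rewrite -hu -hv eq_uv.
Qed.

Section ZeroOnePair.
Variables q b N t : nat.
Let Y := shcycseq q b 1 0 N.
Implicit Types (r i j k : nat).

(* The sequences x and y of the theorem are [xr b] and [yr b], with N = n - b. *)
Definition xr r := nseq r 0 ++ Y.
Definition yr r := nseq r.-1 0 ++ 1 :: Y.

Lemma yr_cons r : 0 < r -> yr r.+1 = 0 :: yr r.
Proof. by case: r. Qed.

Lemma xr_split r : 0 < r -> xr r = nseq r.-1 0 ++ 0 :: Y.
Proof. by case: r => // r _; rewrite /xr /=; elim: r => //= r ->. Qed.

Lemma nth_yr r i : 0 < r -> i != r.-1 -> nth 0 (yr r) i = nth 0 (xr r) i.
Proof.
move=> hr hi; rewrite xr_split // /yr !nth_cat size_nseq; case: ifP => // hir.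
by case E: (i - r.-1) => //; move/eqP: hi; lia.
Qed.

Lemma drop_yr r j : 0 < r -> r <= j -> drop j (yr r) = drop j (xr r).
Proof.
move=> hr hj; rewrite xr_split // /yr !drop_cat size_nseq ltnNge.
by rewrite (leq_trans (leq_pred r) hj) /=; case E: (j - r.-1) => //; lia.
Qed.

Lemma size_xr r : size (xr r) = r + N.
Proof. by rewrite size_cat size_nseq size_shcycseq. Qed.

Lemma size_yr r : 0 < r -> size (yr r) = r + N.
Proof. by move=> hr; rewrite size_cat size_nseq /= size_shcycseq; lia. Qed.

Lemma xr_neq_yr r : 0 < r -> xr r != yr r.
Proof.
move=> hr; apply/eqP => /(congr1 (nth 0 ^~ r.-1)).
by rewrite xr_split // /yr !nth_cat size_nseq ltnn subnn.
Qed.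

(* The term D_{q,b}(n - (q+1)b, t - q) of the theorem, with n = N + b and the
   convention D = 0 when t < q or n < (q+1)b. *)
Definition Dcorr := if (q <= t) && (q * b <= N) then Dcyc q b (N - q * b) (t - q) else 0.

Lemma Dint_xr_yr_degenerate : N.+1 = t * b ->
  Dint b t (xr 1) (yr 1) + Dcyc q b N t = Dcyc q b N.+1 t + Dcorr.
Proof.
move=> hN; have sx : size (xr 1) = t * b by rewrite size_xr.
have sy : size (yr 1) = t * b by rewrite size_yr.
rewrite /Dint (all_filterP _); last first.
  apply/allP => y /mem_Dset_size[_]; rewrite sx subnn => /size0nil ->.
  by rewrite mem_Dset_nil sy.
rewrite (size_Dset_exact sx) Dcyc_short ?Dcyc_exact //; last lia.
rewrite /Dcorr; case: ifP => [/andP[_ hqN] | _]; last by [].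
by rewrite Dcyc_short // mulnBl; lia.
Qed.

Hypothesis b_gt0 : 0 < b.

Lemma xr_shcycseq r : r <= b -> xr r = shcycseq q b 0 (b - r) (r + N).
Proof.
move=> hr; apply: (@eq_from_nth _ 0) => [|i]; rewrite size_xr ?size_shcycseq // => hi.
rewrite nth_cat size_nseq nth_shcycseq //; case: ifP => hir.
  by rewrite nth_nseq hir divn_small ?mod0n //; lia.
rewrite nth_shcycseq; last lia.
by rewrite (_ : b - r + i = 1 * b + (i - r)) ?divnMDl; lia.
Qed.

Lemma cyc_heads_xr r : 0 < r <= b -> t * b < r + N -> cyc_heads q b 0 t (xr r).
Proof.
by case/andP=> hr hrb hn; rewrite xr_shcycseq //; apply: cyc_heads_shcycseq => //; lia.
Qed.

Lemma nth_yr1 k : t * b <= N -> 0 < k <= t -> nth 0 (yr 1) (k * b) = k %% q.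
Proof.
move=> tb_le_N /andP[hk0 hkt]; have hx : cyc_heads q b 0 t (xr 1).
  by apply: cyc_heads_xr; rewrite ?b_gt0 //; lia.
by rewrite nth_yr // ?hx //; apply/eqP; have := leq_pmull b hk0; lia.
Qed.

Hypothesis q_gt1 : 1 < q.
Let q_gt0 : 0 < q := ltnW q_gt1.

Lemma all_xr r : all (gtn q) (xr r).
Proof. by rewrite all_cat (all_shcycseq b q_gt0) all_nseq /= q_gt0 orbT. Qed.

Lemma all_yr r : all (gtn q) (yr r).
Proof. by rewrite all_cat /= q_gt1 (all_shcycseq b q_gt0) all_nseq /= q_gt0 orbT. Qed.

Lemma Dint_xr_yr_step r : 0 < r -> r < b -> t * b <= r + N ->
  Dint b t (xr r.+1) (yr r.+1) + Dcyc q b (r + N) t =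
  Dint b t (xr r) (yr r) + Dcyc q b (r.+1 + N) t.
Proof.
move=> hr hrb hn.
have hx : cyc_heads q b 0 t (xr r.+1) by apply: cyc_heads_xr; rewrite // hrb.
have hy : cyc_heads q b 0 t (yr r.+1).
  move=> k hk; rewrite nth_yr ?hx //; apply/eqP => hkr.
  by case: k {hk} hkr => [|k]; rewrite ?mulSn; lia.
have sx : t * b < size (xr r.+1) by rewrite size_xr.
have sy : t * b < size (yr r.+1) by rewrite size_yr.
have ex r' : r' <= b -> Dcyc q b (r' + N) t = size (Dset b t (xr r')).
  by move=> hr'; rewrite xr_shcycseq // size_Dset_shcycseq.
rewrite (Dint_cyc q_gt0 hx hy sx sy) (ex r.+1 hrb) (size_Dset_cyc q_gt0 hx sx).
have m_gt0 : 0 < minn q t.+1 by rewrite leq_min q_gt0.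
rewrite (ex r (ltnW hrb)) !(big_ltn m_gt0) mul0n subn0 (yr_cons hr) !drop1.
have -> : behead (xr r.+1) = xr r by [].
have -> : behead (0 :: yr r) = yr r by [].
rewrite -(yr_cons hr) (eq_big_nat _ _
  (F2 := fun k => size (Dset b (t - k) (drop (k * b).+1 (xr r.+1))))); first lia.
move=> k /andP[hk _]; rewrite drop_yr ?Dint_refl //.
by rewrite ltnS (leq_trans (ltnW hrb) (leq_pmull b hk)).
Qed.

Section NonDegenerate.
Hypothesis tb_le_N : t * b <= N.

Lemma Dtail_yr1_0 :
  Dtail b t (yr 1) 0 = if q <= t then Dset b (t - q) (drop (q * b) Y) else [::].
Proof.
case: ifP => hqt; last first.
  apply: Dtail_notin => -[|k] hk; first by rewrite mul0n.
  by rewrite nth_yr1 ?modn_small //; lia.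
have e0 : nth 0 (yr 1) (q * b) = 0 by rewrite nth_yr1 ?modnn // q_gt0 hqt.
rewrite -[X in Dtail _ _ _ X]e0 (Dtail_first hqt) // => -[|j] hjq; rewrite e0.
  by rewrite mul0n.
by rewrite nth_yr1 ?modn_small //; lia.
Qed.

Lemma Dtail_yr1_1 : Dtail b t (yr 1) 1 = Dset b t Y.
Proof. by have := Dtail_head b t (yr 1); rewrite drop1. Qed.

Lemma Dtail_yr1 k : 1 < k < minn q t.+1 ->
  Dtail b t (yr 1) k = Dset b (t - k) (drop (k * b).+1 (xr 1)).
Proof.
case/andP=> hk1; rewrite leq_min ltnS => /andP[hkq hkt].
have ek : nth 0 (yr 1) (k * b) = k by rewrite nth_yr1 ?modn_small // hkt ltnW.
rewrite -[X in Dtail _ _ _ X]ek (Dtail_first hkt) ?drop_yr // ek => -[|j] hj.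
  by rewrite mul0n /=; lia.
by rewrite nth_yr1 ?modn_small //; lia.
Qed.

Lemma Dint_xr_yr_base : 0 < t ->
  Dint b t (xr 1) (yr 1) + Dcyc q b N t = Dcyc q b N.+1 t + Dcorr.
Proof.
move=> ht; set m := minn q t.+1; have m_gt1 : 1 < m by rewrite leq_min q_gt1 ltnS.
have hx : cyc_heads q b 0 t (xr 1) by apply: cyc_heads_xr; rewrite ?b_gt0 //; lia.
have sx : t * b < size (xr 1) by rewrite size_xr; lia.
have sy : t * b < size (yr 1) by rewrite size_yr //; lia.
have le_mul k : k <= t -> k * b <= t * b by move=> hk; rewrite leq_mul2r hk orbT.
pose T k := Dset b (t - k) (drop (k * b).+1 (xr 1)).
have eDint : Dint b t (xr 1) (yr 1) =
    \sum_(0 <= k < m) size [seq y <- T k | y \in Dtail b t (yr 1) k].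
  rewrite (Dint_cycl q_gt0 hx sx sy); apply: eq_big_nat => k.
  by rewrite leq_min add0n => /andP[_ /andP[hkq _]]; rewrite modn_small.
have eD : Dcyc q b N.+1 t = \sum_(0 <= k < m) size (T k).
  rewrite -add1n -(size_Dset_shcycseq q_gt0 b_gt0 0 (b - 1)) -(xr_shcycseq b_gt0).
  exact: (size_Dset_cyc q_gt0 hx sx).
have eY : drop (0 * b).+1 (xr 1) = Y by rewrite mul0n drop1.
have T0 : size [seq y <- T 0 | y \in Dtail b t (yr 1) 0] = Dcorr.
  rewrite /T eY subn0 Dtail_yr1_0 /Dcorr; case: ifP => hqt; last first.
    by rewrite (@eq_filter _ _ pred0) // filter_pred0.
  have hqN : q * b <= N by apply: leq_trans (le_mul _ hqt) tb_le_N.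
  have hqY : q * b <= size Y by rewrite size_shcycseq.
  rewrite hqN (size_filter_mem_sub (Dset_uniq _ _ _) (Dset_uniq _ _ _)).
    by rewrite drop_shcycseq; exact: size_Dset_shcycseq.
  by move=> y /(Dset_drop hqY); rewrite subnKC.
have T1 : size [seq y <- T 1 | y \in Dtail b t (yr 1) 1] = size (T 1).
  rewrite Dtail_yr1_1 (all_filterP _) //; apply/allP => y.
  have hbY : 1 * b <= size Y by rewrite size_shcycseq; have := le_mul _ ht; lia.
  by move/(Dset_drop hbY); rewrite subnKC.
have Tk : \sum_(2 <= k < m) size [seq y <- T k | y \in Dtail b t (yr 1) k] =
          \sum_(2 <= k < m) size (T k).
  by apply: eq_big_nat => k hk; rewrite Dtail_yr1 // (all_filterP _) //; exact/allP.
have hY : Dcyc q b N t = size (T 0) by rewrite /T eY subn0 size_Dset_shcycseq.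
by rewrite eDint eD !(big_ltn (ltnW m_gt1)) !(big_ltn m_gt1) T0 T1 Tk hY; lia.
Qed.

End NonDegenerate.

Lemma Dint_xr_yr r : 0 < t -> t * b <= N.+1 -> 0 < r <= b ->
  Dint b t (xr r) (yr r) + Dcyc q b N t = Dcyc q b (r + N) t + Dcorr.
Proof.
move=> ht hN; elim: r => [|[|r] IH] // /andP[_ hrb].
  rewrite add1n; have [hN' | hN'] := ltnP (t * b) N.+1; first exact: Dint_xr_yr_base.
  by apply: Dint_xr_yr_degenerate; apply/eqP; rewrite eqn_leq hN hN'.
have := IH (ltnW hrb); have := @Dint_xr_yr_step r.+1 isT hrb; lia.
Qed.

End ZeroOnePair.

Lemma Dmax_Dcorr q b N t : 0 < q -> 0 < b ->
  Dmax q b ((b + N)%:Z - (q.+1 * b)%:Z) (t%:Z - q%:Z) = Dcorr q b N t.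
Proof.
move=> q_gt0 b_gt0; rewrite /Dcorr.
have [hqt | hqt] := leqP q t; last by rewrite /Dmax ifT //; lia.
rewrite (subzn hqt); have [hqN | hqN] := leqP (q * b) N; last by rewrite /Dmax /= ifT //; lia.
have -> : (((b + N)%:Z - (q.+1 * b)%:Z) = (N - q * b)%:Z)%R by rewrite mulSn; lia.
by rewrite Dmax_Dcyc // hqN.
Qed.

Theorem lemma4p13 (q b t n : nat) :
  2 <= q -> 2 <= b -> 1 <= t -> (t.+1 * b).-1 <= n ->
  let x := nseq b 0 ++ cycseq 1 (n - b) q b in
  let y := nseq b.-1 0 ++ [:: 1] ++ cycseq 1 (n - b) q b in
  ((Dint b t x y)%:Z =
     (Dmax q b n%:Z t%:Z)%:Z - (Dmax q b (n%:Z - b%:Z) t%:Z)%:Z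
     + (Dmax q b (n%:Z - (q.+1 * b)%:Z) (t%:Z - q%:Z))%:Z)%R /\
  ((Nminus q b n t)%:Z >=
     (Dmax q b n%:Z t%:Z)%:Z - (Dmax q b (n%:Z - b%:Z) t%:Z)%:Z
     + (Dmax q b (n%:Z - (q.+1 * b)%:Z) (t%:Z - q%:Z))%:Z)%R.
Proof.
move=> hq hb ht hn x y.
have q_gt0 : 0 < q by lia.
have b_gt0 : 0 < b by lia.
have hbn : b <= n by move: hn; rewrite mulSn; lia.
set N := n - b; have hN : t * b <= N.+1 by move: hn; rewrite mulSn /N; lia.
have eN : n = b + N by rewrite /N subnKC.
have key := Dint_xr_yr b_gt0 hq ht hN (r := b); rewrite -eN in key.
have E3 : Dmax q b (n%:Z - (q.+1 * b)%:Z) (t%:Z - q%:Z) = Dcorr q b N t.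
  by rewrite eN Dmax_Dcorr.
rewrite (subzn hbn) !Dmax_Dcyc // E3.
have ex : x = xr q b N b by [].
have ey : y = yr q b N b by [].
have eq_int : ((Dint b t x y)%:Z =
    (Dcyc q b n t)%:Z - (Dcyc q b N t)%:Z + (Dcorr q b N t)%:Z)%R.
  by rewrite ex ey; lia.
split=> //; rewrite -eq_int lez_nat ex ey.
by apply: Dint_le_Nminus; rewrite ?size_xr ?size_yr ?all_xr ?all_yr ?xr_neq_yr.
Qed.
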